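(* Let $V,V'$ be finite-dimensional complex vector spaces, $G\subset GL(V)$ and $G'\subset GL(V')$ finite subgroups, and $F:V\to V'$ a holomorphic diffeomorphism which maps $G$-orbits bijectively onto $G'$-orbits. Then there is a unique group isomorphism $a:G\to G'$ such that $F\circ g=a(g)\circ F$ for every $g\in G$. In particular $a$ and $a^{-1}$ map complex reflections to complex reflections. *)

From HB Require Import structures.
From mathcomp Require Import all_boot all_order all_algebra.
From mathcomp Require Import complex.
From mathcomp Require Import all_classical all_reals all_analysis.
Set Implicit Arguments. Unset Strict Implicit. Unset Printing Implicit Defensive.
Import Order.TTheory GRing.Theory Num.Theory numFieldNormedType.Exports.
Local Open Scope ring_scope.
Local Open Scope classical_set_scope.

(* V = C^n is modelled as column vectors 'cV[R[i]]_n; a linear map g in GL(V)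
   is an invertible matrix acting by v |-> g *m v (so composition of maps is
   the matrix product). *)

Definition finite_matrix_group (R : realType) (n : nat)
    (G : set 'M[R[i]]_n) : Prop :=
  [/\ finite_set G,
      G 1%:M,
      (forall A B, G A -> G B -> G (A *m B)) &
      (forall A, G A -> A \in unitmx /\ G (invmx A))].

Definition mx_orbit (R : realType) (n : nat) (G : set 'M[R[i]]_n)
    (x : 'cV[R[i]]_n) : set 'cV[R[i]]_n :=
  [set g *m x | g in G].

(* F : C^n -> C^m is holomorphic: complex (Frechet) differentiable at every
   point, the differential being R[i]-linear. *)
Definition holomorphic (R : realType) (n m : nat)
    (F : 'cV[R[i]]_n -> 'cV[R[i]]_m) : Prop :=
  forall x, differentiable F x.

Definition holomorphic_diffeo (R : realType) (n m : nat)
    (F : 'cV[R[i]]_n -> 'cV[R[i]]_m) : Prop :=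
  holomorphic F /\
  exists Fi : 'cV[R[i]]_m -> 'cV[R[i]]_n,
    [/\ cancel F Fi, cancel Fi F & holomorphic Fi].

(* A complex reflection (in a finite group, so of finite order): an element
   whose fixed space {v | g v = v} = ker (g - 1) is a hyperplane, i.e.
   rank (g - 1) = 1. *)
Definition complex_reflection (R : realType) (n : nat) (g : 'M[R[i]]_n) : Prop :=
  \rank (g - 1%:M) = 1%N.

Definition equivariant_iso (R : realType) (n m : nat)
    (G : set 'M[R[i]]_n) (G' : set 'M[R[i]]_m)
    (F : 'cV[R[i]]_n -> 'cV[R[i]]_m) (a : 'M[R[i]]_n -> 'M[R[i]]_m) : Prop :=
  [/\ (forall g, G g -> G' (a g)),
      (forall g h, G g -> G h -> a g = a h -> g = h),
      (forall g', G' g' -> exists2 g, G g & a g = g'),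
      (forall g h, G g -> G h -> a (g *m h) = a g *m a h) &
      (forall g, G g -> forall v, F (g *m v) = a g *m F v)].

From HB Require Import structures.
From mathcomp Require Import all_boot all_order all_algebra.
From mathcomp Require Import complex.
From mathcomp Require Import all_classical all_reals all_analysis.
Import Order.TTheory GRing.Theory Num.Theory numFieldNormedType.Exports.
Local Open Scope ring_scope.
Local Open Scope classical_set_scope.

(* For g in G the continuous map y |-> F (g (F^-1 y)) agrees at each point y
   with some h in the finite group G' (F maps orbits onto orbits).  Two distinct
   elements of G' agree only on a proper subspace, and the complement of
   finitely many proper subspaces of C^m is connected, so the same h works at
   every point: this h is a(g).  Since F is bijective, equivariance makes a an
   isomorphism and determines it.  Differentiating F o g = a(g) o F at the
   common fixed point 0 shows that g and a(g) are conjugate by dF(0), hence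
   rank (g - 1) = rank (a(g) - 1). *)

Lemma mulmx_col_ext {K : fieldType} {m n : nat} (A B : 'M[K]_(m, n)) :
  (forall v : 'cV[K]_n, A *m v = B *m v) -> A = B.
Proof.
move=> AB; apply/matrixP=> i j.
have := congr1 (fun v : 'cV_m => v i 0) (AB (delta_mx j 0)).
by rewrite -!colE !mxE.
Qed.

Lemma mulmx_ext_surj {K : fieldType} {m n p : nat} {F : 'cV[K]_p -> 'cV[K]_n}
    {Fi : 'cV[K]_n -> 'cV[K]_p} {A B : 'M[K]_(m, n)} :
  cancel Fi F -> (forall v, A *m F v = B *m F v) -> A = B.
Proof. by move=> FiK AB; apply: mulmx_col_ext => y; rewrite -(FiK y). Qed.

Lemma linear_mulmx_col {K : fieldType} {m n : nat}
    (L : {linear 'cV[K]_n -> 'cV[K]_m}) :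
  exists M : 'M[K]_(m, n), forall v, L v = M *m v.
Proof.
exists (\matrix_(i, j) L (delta_mx j 0) i 0) => v.
rewrite {1}(matrix_sum_delta v) linear_sum; apply/matrixP => i k.
rewrite (ord1 k) !mxE summxE; apply: eq_bigr => j _.
by rewrite big_ord1 linearZ !mxE mulrC.
Qed.

Lemma mxrank_sub1_intertwined {K : fieldType} {n m : nat}
    (g : 'M[K]_n) (h : 'M[K]_m) (M : 'M[K]_(m, n)) (N : 'M[K]_(n, m)) :
  M *m N = 1%:M -> N *m M = 1%:M -> h *m M = M *m g ->
  \rank (g - 1%:M) = \rank (h - 1%:M).
Proof.
move=> MN NM hM.
have eh : h - 1%:M = M *m (g - 1%:M) *m N.
  by rewrite mulmxBr mulmxBl !mulmx1 MN -hM -mulmxA MN mulmx1.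
have eg : g - 1%:M = N *m (h - 1%:M) *m M.
  by rewrite mulmxBr mulmxBl !mulmx1 NM -(mulmxA N) hM mulmxA NM mul1mx.
apply/eqP; rewrite eqn_leq {1}eg eh.
by apply/andP; split; apply: leq_trans (mxrankM_maxl _ _) (mxrankM_maxr _ _).
Qed.

Lemma exists_gt_avoiding {R : realDomainType} {I : eqType} (s : seq I)
    (P : I -> R -> Prop) :
  (forall i, i \in s -> forall c c', P i c -> P i c' -> c = c') ->
  forall b, exists c, b < c /\ forall i, i \in s -> ~ P i c.
Proof.
elim: s => [|i s IH] Puniq b; first by exists (b + 1); rewrite ltrDl ltr01.
have {}IH := IH (fun j js => Puniq j (mem_behead (s := i :: s) js)).
have [c1 [bc1 Pc1]] := IH b.
have [Pic1|nPic1] := pselect (P i c1); last first.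
  by exists c1; split => // j; rewrite inE => /predU1P [->|/Pc1].
have [c2 [c12 Pc2]] := IH c1.
exists c2; split; first exact: lt_trans bc1 c12.
move=> j; rewrite inE => /predU1P [-> Pic2|/Pc2//].
by move: c12; rewrite (Puniq i (mem_head _ _) _ _ Pic1 Pic2) ltxx.
Qed.

Lemma mulmx_line_eq0_uniq {K : fieldType} {p m : nat} {A : 'M[K]_(p, m)}
    {y d : 'cV[K]_m} {t1 t2 : K} :
  A *m y != 0 -> A *m (y + t1 *: d) = 0 -> A *m (y + t2 *: d) = 0 -> t1 = t2.
Proof.
rewrite !mulmxDr -!scalemxAr => Ay0 e1 e2.
have : (t1 - t2) *: (A *m d) = 0.
  rewrite scalerBl -[t1 *: _](addKr (A *m y)) -[t2 *: _](addKr (A *m y)).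
  by rewrite e1 e2 subrr.
move/eqP; rewrite scaler_eq0 subr_eq0 => /orP [/eqP //|/eqP Ad0].
by move: e1; rewrite Ad0 scaler0 addr0 => /eqP; rewrite (negbTE Ay0).
Qed.

Lemma exists_col_avoiding_kernels {K : numFieldType} {p m : nat}
    (s : seq 'M[K]_(p, m)) :
  (forall A, A \in s -> A != 0) ->
  exists y : 'cV[K]_m, forall A, A \in s -> A *m y != 0.
Proof.
elim: s => [|A s IH] snz; first by exists 0.
have [y Ay] := IH (fun B Bs => snz B (mem_behead (s := A :: s) Bs)).
have [Ay0|Ay0] := eqVneq (A *m y) 0; last first.
  by exists y => B; rewrite inE => /predU1P [->|/Ay].
have [w Aw] : exists w : 'cV[K]_m, A *m w != 0.
  apply: contrapT => /forallNP Aw0; have /negP := snz A (mem_head _ _); apply.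
  apply/eqP/mulmx_col_ext => v; rewrite mul0mx; apply/eqP/negPn/negP; exact: Aw0.
pose P (B : 'M[K]_(p, m)) (c : int) := B *m (y + c%:~R *: w) = 0.
have [c [c0 Pc]] : exists c : int, 0 < c /\ forall B, B \in s -> ~ P B c.
  apply: exists_gt_avoiding => B Bs c c' e e'.
  by apply: (@intr_inj K); exact: mulmx_line_eq0_uniq (Ay B Bs) e e'.
exists (y + c%:~R *: w) => B; rewrite inE => /predU1P [->|Bs]; last exact/eqP/Pc.
rewrite mulmxDr Ay0 add0r -scalemxAr scaler_eq0 negb_or Aw andbT intr_eq0.
by rewrite gt_eqF.
Qed.

Lemma mulmx_continuous {K : numFieldType} {m n : nat} (A : 'M[K]_(m, n)) :
  continuous (fun v : 'cV[K]_n => A *m v).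
Proof.
have -> : (fun v : 'cV[K]_n => A *m v) = (fun v => \sum_(j < n) v j 0 *: col j A).
  apply/funext => v; apply/matrixP => i k; rewrite (ord1 k) !mxE summxE.
  by apply: eq_bigr => j _; rewrite !mxE mulrC.
apply: (continuous_big add_continuous) => j _ v.
by apply: continuousZr_tmp; exact: coord_continuous.
Qed.

Lemma mulmx_differentiable {K : numFieldType} {m n : nat} (A : 'M[K]_(m, n))
    (x : 'cV[K]_n) :
  differentiable (mulmx A) x.
Proof.
exact: (linear_differentiable (f := mulmx A : {linear 'cV[K]_n -> 'cV[K]_m}) x
  (mulmx_continuous A)).
Qed.

Lemma closed_eqfun {K : numFieldType} {T : topologicalType} {V : normedModType K}
    (f g : T -> V) :
  continuous f -> continuous g -> closed [set t | f t = g t].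
Proof.
move=> cf cg; have -> : [set t | f t = g t] = (f \- g) @^-1` [set 0].
  apply/seteqP; split => t /=; first by move=> ->; rewrite subrr.
  by move/eqP; rewrite subr_eq0 => /eqP.
apply: (continuous_closedP _).1; first by move=> t; exact: continuousB (cf t) (cg t).
exact/accessible_closed_set1/hausdorff_accessible/norm_hausdorff.
Qed.

Lemma connected_closed_cover_sub {T : topologicalType} {I : choiceType}
    (s : seq I) (A : set T) (P : I -> set T) :
  connected A -> (forall i, closed (P i)) ->
  (forall t, A t -> exists2 i, i \in s & P i t) ->
  {in s &, forall i j t, A t -> P i t -> P j t -> i = j} ->
  forall i t, i \in s -> A t -> P i t -> A `<=` P i.
Proof.
move=> cA cP cover disj i t0 si At0 Pit0.
suff <- : A `&` P i = A by move=> t [].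
apply: cA; first by exists t0.
- exists (~` \big[setU/set0]_(j <- s | j != i) P j).
    by rewrite openC -big_filter; apply: closed_bigsetU => j _.
  rewrite -bigcup_seq_cond; apply/seteqP; split => t [At Pit]; split => //.
    by move=> [j /andP [js /eqP ji] Pjt]; exact/ji/(disj _ _ js si t).
  have [j js Pjt] := cover t At; have [<-//|ji] := eqVneq j i.
  by exfalso; apply: Pit; exists j => //; apply/andP.
- by exists (P i).
Qed.

Lemma closed_itvco_end {R : realType} {E : set R} {a b : R} :
  closed E -> a < b -> (forall s, a <= s < b -> E s) -> E b.
Proof.
move=> cE ab Eab; apply: (@closed_cvg _ _ (at_left b) _ id E cE _ b).
  near=> s; apply: Eab; apply/andP; split; last by near: s; exact: nbhs_left_lt.
  by near: s; exact: nbhs_left_ge.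
exact/cvg_at_left_filter/cvg_id.
Unshelve. all: by end_near. Qed.

Section ContinuousSelection.
Variable R : realType.
Local Open Scope complex_scope.
Local Notation C := (R[i] : numFieldType).

Lemma realC_continuous : continuous (fun s : R => s%:C : C).
Proof.
move=> x; apply/cvgrPdist_lt => e e0.
have [er er0 ->] : exists2 er : R, 0 < er & e = er%:C.
  by move: e0; case: e => a b; rewrite ltcE /= => /andP [/eqP -> a0]; exists a.
near=> t.
rewrite -rmorphB /= normc_def /= expr0n /= addr0 sqrtr_sqr ltcR.
by near: t; exact: cvgr_dist_lt.
Unshelve. all: by end_near. Qed.

(* For distinct c these arcs from 0 to 1 meet only at their end points. *)
Definition arc (c s : R) : C := Complex s (c * s * (1 - s)).

Lemma arc_continuous c : continuous (arc c).
Proof.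
have -> : arc c = (fun s => s%:C + 'i * (c * s * (1 - s))%:C).
  apply/funext => s; apply/eqP.
  by rewrite eq_complex /= !(mul0r, mul1r, subr0, addr0, add0r) !eqxx.
move=> s; apply: continuousD; first exact: realC_continuous.
apply: continuousM; first exact: cvg_cst.
apply: (continuous_comp (f := fun s => c * s * (1 - s))); last exact: realC_continuous.
apply: continuousM; first by apply: continuousM; [exact: cvg_cst | exact: cvg_id].
by apply: continuousB; [exact: cvg_cst | exact: cvg_id].
Qed.

Lemma arc0 c : arc c 0 = 0.
Proof. by rewrite /arc !(mulr0, mul0r). Qed.

Lemma arc1 c : arc c 1 = 1.
Proof. by rewrite /arc subrr mulr0. Qed.

Lemma arc_inj {c c' s s' : R} : s != 0 -> s != 1 -> arc c s = arc c' s' -> c = c'.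
Proof.
move=> s0 s1 [<-] e; have s1' : 1 - s != 0 by rewrite subr_eq0 eq_sym.
exact/(mulIf s0)/(mulIf s1').
Qed.

Lemma exists_path_avoiding_kernels {m : nat} {D : seq 'M[C]_m} {y : 'cV[C]_m}
    (z : 'cV[C]_m) :
  (forall A, A \in D -> A *m y != 0) ->
  exists gam : R -> 'cV[C]_m, [/\ continuous gam, gam 0 = y, gam 1 = z &
    forall s, 0 <= s < 1 -> forall A, A \in D -> A *m gam s != 0].
Proof.
move=> Dy; pose gam c s := y + arc c s *: (z - y).
have [c [_ Dgam]] : exists c : R, 0 < c /\ forall A, A \in D ->
    ~ exists2 s, 0 <= s < 1 & A *m gam c s = 0.
  apply: exists_gt_avoiding => A AD c1 c2 [s1 /andP [s10 s11] e1] [s2 _ e2].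
  apply: (arc_inj _ _ (mulmx_line_eq0_uniq (Dy A AD) e1 e2)); last by rewrite lt_eqF.
  apply: contraTneq (Dy A AD) => s0; rewrite negbK.
  by move: e1; rewrite /gam s0 arc0 scale0r addr0 => ->.
exists (gam c); split.
- move=> s; apply: (continuousD (f := fun=> y) (g := fun s => arc c s *: (z - y))).
    exact: cvg_cst.
  by apply: continuousZr_tmp; exact: arc_continuous.
- by rewrite /gam arc0 scale0r addr0.
- by rewrite /gam arc1 scale1r addrC subrK.
- by move=> s s01 A AD; apply/eqP => e; apply: (Dgam A AD); exists s.
Qed.

Lemma continuous_mx_selection m (S : seq 'M[C]_m) (Phi : 'cV[C]_m -> 'cV[C]_m) :
  continuous Phi -> (forall y, exists2 h, h \in S & Phi y = h *m y) ->
  exists2 h, h \in S & forall y, Phi y = h *m y.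
Proof.
move=> cPhi PhiS.
pose D := [seq A <- [seq h1 - h2 | h1 <- S, h2 <- S] | A != 0].
(* Off the kernels of D the elements of S take pairwise distinct values, so
   along a path avoiding them the element matching Phi cannot jump. *)
have sepD (y : 'cV[C]_m) : (forall A, A \in D -> A *m y != 0) ->
    {in S &, forall h1 h2, h1 *m y = h2 *m y -> h1 = h2}.
  move=> Dy h1 h2 h1S h2S e; apply/eqP; apply: contraT => h12.
  have /Dy : h1 - h2 \in D.
    by rewrite mem_filter subr_eq0 h12; exact: allpairs_f.
  by rewrite mulmxBl e subrr eqxx.
have [y0 Dy0] : exists y0 : 'cV[C]_m, forall A, A \in D -> A *m y0 != 0.
  by apply: exists_col_avoiding_kernels => A; rewrite mem_filter => /andP [].
have [h0 h0S Phy0] := PhiS y0.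
exists h0 => // z.
have [gam [cgam gam0 gam1 Dgam]] := exists_path_avoiding_kernels z Dy0.
pose P h := [set s | Phi (gam s) = h *m gam s].
have cP h : closed (P h).
  apply: closed_eqfun => s; first exact: continuous_comp (cgam s) (cPhi _).
  exact: continuous_comp (cgam s) (mulmx_continuous h _).
have Ph0 : [set s : R | 0 <= s < 1] `<=` P h0.
  apply: (@connected_closed_cover_sub _ _ S _ P _ cP _ _ h0 0) => //.
  - apply/connected_intervalP => x x' /andP [x0 _] /andP [_ x'1] w /andP [xw wx'].
    by rewrite /= (le_trans x0 xw) (le_lt_trans wx' x'1).
  - by move=> s _; exact: PhiS.
  - by move=> h1 h2 h1S h2S s /Dgam /sepD sep P1 P2; apply: sep; rewrite // -P1 -P2.
  - by rewrite /= lexx ltr01.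
  - by rewrite /P /= gam0.
by have := closed_itvco_end (cP h0) ltr01 Ph0; rewrite /P /= gam1.
Qed.

End ContinuousSelection.

Lemma differential_mx_inv {K : numFieldType} {n m : nat}
    {F : 'cV[K]_n -> 'cV[K]_m} {Fi : 'cV[K]_m -> 'cV[K]_n} {x : 'cV[K]_n} :
  cancel F Fi -> cancel Fi F -> differentiable F x -> differentiable Fi (F x) ->
  exists M : 'M[K]_(m, n), exists N : 'M[K]_(n, m),
    [/\ M *m N = 1%:M, N *m M = 1%:M & forall v, 'd F x v = M *m v].
Proof.
move=> FK FiK dF dFi.
have [M dFM] := linear_mulmx_col ('d F x).
have [N dFiN] := linear_mulmx_col ('d Fi (F x)).
have dF' : differentiable F (Fi (F x)) by rewrite FK.
have FiF : Fi \o F = id by apply/funext => y; exact: FK.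
have FFi : F \o Fi = id by apply/funext => y; exact: FiK.
have := diff_comp dF dFi; have := diff_comp dFi dF'.
rewrite FK FFi FiF !diff_val => dFFi dFiF.
exists M, N; split => //.
- apply: mulmx_col_ext => v; rewrite mul1mx -mulmxA -dFiN -dFM.
  by have := congr1 (fun f => f v) dFFi.
- apply: mulmx_col_ext => v; rewrite mul1mx -mulmxA -dFM -dFiN.
  by have := congr1 (fun f => f v) dFiF.
Qed.

Lemma differential_intertwines {K : numFieldType} {n m : nat}
    {F : 'cV[K]_n -> 'cV[K]_m} {g : 'M[K]_n} {h : 'M[K]_m} {M : 'M[K]_(m, n)} :
  differentiable F 0 -> (forall v, 'd F 0 v = M *m v) ->
  (forall v, F (g *m v) = h *m F v) -> h *m M = M *m g.
Proof.
move=> dF dFM Fgh; apply: mulmx_col_ext => v.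
have dF' : differentiable F (g *m 0) by rewrite mulmx0.
have d1 := diff_comp (mulmx_differentiable g 0) dF'.
have d2 := diff_comp dF (mulmx_differentiable h (F 0)).
have Fgh' : F \o mulmx g = mulmx h \o F by apply/funext => y; exact: Fgh.
rewrite Fgh' in d1; have := congr1 (fun f => f v) (etrans (esym d1) d2) => /=.
rewrite !diff_lin ?mulmx0; try exact: mulmx_continuous.
by rewrite -!mulmxA -!dFM => ->.
Qed.

Lemma diffeo_conj_mxrank_sub1 {K : numFieldType} {n m : nat}
    {F : 'cV[K]_n -> 'cV[K]_m} {Fi : 'cV[K]_m -> 'cV[K]_n}
    {g : 'M[K]_n} {h : 'M[K]_m} :
  cancel F Fi -> cancel Fi F -> differentiable F 0 -> differentiable Fi (F 0) ->
  (forall v, F (g *m v) = h *m F v) -> \rank (g - 1%:M) = \rank (h - 1%:M).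
Proof.
move=> FK FiK dF dFi Fgh.
have [M [N [MN NM dFM]]] := differential_mx_inv FK FiK dF dFi.
exact: mxrank_sub1_intertwined MN NM (differential_intertwines dF dFM Fgh).
Qed.

Section OrbitPreservingMaps.
Context {R : realType} {n m : nat}.
Local Notation C := (R[i] : numFieldType).
Context {G : set 'M[C]_n} {G' : set 'M[C]_m}.
Context {F : 'cV[C]_n -> 'cV[C]_m} {Fi : 'cV[C]_m -> 'cV[C]_n}.
Hypotheses (FK : cancel F Fi) (FiK : cancel Fi F).
Hypothesis orbitF : forall x, F @` mx_orbit G x = mx_orbit G' (F x).

Lemma orbit_inverse y : Fi @` mx_orbit G' y = mx_orbit G (Fi y).
Proof.
have orbitFi := orbitF (Fi y); rewrite FiK in orbitFi.
apply/seteqP; split => x.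
  by move=> [w]; rewrite -orbitFi => -[u uO <-] <-; rewrite FK.
by move=> xO; exists (F x); [rewrite -orbitFi; exists x | exact: FK].
Qed.

Lemma orbit_map_conj : finite_set G' -> continuous F -> continuous Fi ->
  forall g, G g -> exists2 h, G' h & forall v, F (g *m v) = h *m F v.
Proof.
move=> /finite_seqP [S eS] cF cFi g Gg.
have [h hS Fgh] : exists2 h, h \in S & forall y, F (g *m Fi y) = h *m y.
  apply: continuous_mx_selection => [y|y].
    exact: continuous_comp (cFi y) (continuous_comp (mulmx_continuous g _) (cF _)).
  have : mx_orbit G' y (F (g *m Fi y)).
    by rewrite -[y in mx_orbit _ y]FiK -orbitF; exists (g *m Fi y) => //; exists g.
  by move=> [h + <-]; rewrite eS; exists h.
by exists h => [|v]; rewrite ?eS // -Fgh FK.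
Qed.

End OrbitPreservingMaps.

Theorem lemma5p1 (R : realType) (n m : nat)
    (G : set 'M[R[i]]_n) (G' : set 'M[R[i]]_m)
    (F : 'cV[R[i]]_n -> 'cV[R[i]]_m) :
  finite_matrix_group G -> finite_matrix_group G' ->
  holomorphic_diffeo F ->
  (forall x, F @` mx_orbit G x = mx_orbit G' (F x)) ->
  exists a : 'M[R[i]]_n -> 'M[R[i]]_m,
    [/\ equivariant_iso G G' F a,
        (forall b, equivariant_iso G G' F b -> forall g, G g -> b g = a g) &
        (forall g, G g -> complex_reflection g <-> complex_reflection (a g))].
Proof.
move=> [finG _ GM _] [finG' _ _ _] [dF [Fi [FK FiK dFi]]] orbitF.
pose C := (R[i] : numFieldType).
have cF : continuous (F : 'cV[C]_n -> 'cV[C]_m).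
  by move=> x; exact: differentiable_continuous.
have cFi : continuous (Fi : 'cV[C]_m -> 'cV[C]_n).
  by move=> x; exact: differentiable_continuous.
have conjG := orbit_map_conj FK FiK orbitF finG' cF cFi.
have conjG' := orbit_map_conj FiK FK (orbit_inverse FK FiK orbitF) finG cFi cF.
have /choice [a aP] :
    forall g, exists h, G g -> G' h /\ forall v, F (g *m v) = h *m F v.
  move=> g; have [/conjG [h G'h Fgh]|nGg] := pselect (G g).
    by exists h.
  by exists 0 => /nGg.
have aF g : G g -> forall v, F (g *m v) = a g *m F v by move=> /aP [].
have a_uniq h g : G g -> (forall v, F (g *m v) = h *m F v) -> h = a g.
  by move=> Gg Fgh; apply: (mulmx_ext_surj FiK) => v; rewrite -Fgh aF.
exists a; split => [|b [_ _ _ _ bF] g Gg|g Gg]; last 2 first.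
- exact: a_uniq Gg (bF g Gg).
- rewrite /complex_reflection.
  by rewrite (diffeo_conj_mxrank_sub1 FK FiK (dF 0) (dFi (F 0)) (aF g Gg)).
split => [g /aP [] //|g h Gg Gh gh|g' /conjG' [g Gg Fig]|g h Gg Gh|//].
- by apply: mulmx_col_ext => v; apply: (can_inj FK); rewrite !aF // gh.
- exists g => //; apply/esym/a_uniq => // v.
  by rewrite -[v in F (g *m v)]FK -Fig FiK.
- apply/esym/a_uniq => [|v]; first exact: GM.
  by rewrite -mulmxA !aF ?mulmxA.
Qed.
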